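(* Let $Q=(V,E)$ be a natural join query over binary relations, and let $I$ be an instance in which every relation has at most $N\ge1$ tuples. Let $T_0=R_0^I$ for some relation $R_0\in E$. For $j=0,\dots,m-1$, let $T_{j+1}=T_j\bowtie R_j^I$, where $R_j(X_j,Y_j)\in E$ is a relation such that $X_j$ is an attribute of $T_j$ and $R_j^I$ is light in $X_j$. Let $k$ be the number of distinct attributes of $T_m$. Then $$|T_m|\le N^{k/2}\le\mathrm{AGM}(Q).$$
   Context: A natural join query over binary relations consists of relation symbols, each having exactly two distinct attributes; relations are sets of tuples. The query graph $(V,E)$ has one vertex per attribute and one edge per relation. For a relation $R$ with attribute $X$ and a value $a$, the degree is $d_R(a)=|\{t\in R:t.X=a\}|$. $R$ is light in $X$ if $d_R(a)\le\sqrt N$ for every value $a$. A fractional vertex packing is a map $u:V\to[0,1]$ with $u_x+u_y\le 1$ for every edge $\{x,y\}\in E$. Define $\mathrm{AGM}(Q)=\max_u N^{\sum_{x\in V}u_x}$, the maximum taken over fractional vertex packings $u$. *)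

From HB Require Import structures.
From mathcomp Require Import all_boot all_order all_algebra.
From mathcomp Require Import boolp classical_sets reals exp.
Set Implicit Arguments. Unset Strict Implicit. Unset Printing Implicit Defensive.
Import Order.TTheory GRing.Theory Num.Theory.
Local Open Scope ring_scope.

(* Query: attributes V (vertices), relation symbols Rel (edges);
   relation r has the two attributes a1 r, a2 r.
   Instance: I r : {set D * D}, the tuple (p.1, p.2) assigns p.1 to a1 r, p.2 to a2 r.
   A tuple over a schema S : {set V} is a t : {ffun V -> option D} defined exactly on S. *)

Definition tup (V D : finType) := {ffun V -> option D}.

Definition relattrs (V Rel : finType) (a1 a2 : Rel -> V) (r : Rel) : {set V} :=
  [set a1 r; a2 r].

Definition rtuples (V D Rel : finType) (a1 a2 : Rel -> V) (I : Rel -> {set D * D})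
  (r : Rel) : {set tup V D} :=
  [set t : tup V D | [exists p in I r,
     t == [ffun x => if x == a1 r then Some p.1
                     else if x == a2 r then Some p.2 else None]]].

Definition restr (V D : finType) (S : {set V}) (t : tup V D) : tup V D :=
  [ffun x => if x \in S then t x else None].

Definition dom (V D : finType) (t : tup V D) : {set V} := [set x | t x != None].

Definition njoin (V D : finType) (S : {set V}) (T : {set tup V D})
  (S' : {set V}) (U : {set tup V D}) : {set tup V D} :=
  [set t : tup V D | [&& dom t == S :|: S', restr S t \in T & restr S' t \in U]].

Definition degree (V D Rel : finType) (a1 a2 : Rel -> V) (I : Rel -> {set D * D})
  (r : Rel) (x : V) (a : D) : nat :=
  #|[set p in I r | (if x == a1 r then p.1 else p.2) == a]|.

Definition light (R : realType) (V D Rel : finType) (a1 a2 : Rel -> V)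
  (I : Rel -> {set D * D}) (N : R) (r : Rel) (x : V) : Prop :=
  forall a : D, (degree a1 a2 I r x a)%:R <= Num.sqrt N.

Fixpoint sch (V Rel : finType) (a1 a2 : Rel -> V) (r0 : Rel) (Rs : nat -> Rel)
  (j : nat) : {set V} :=
  match j with
  | 0 => relattrs a1 a2 r0
  | j'.+1 => sch a1 a2 r0 Rs j' :|: relattrs a1 a2 (Rs j')
  end.

Fixpoint Tj (V D Rel : finType) (a1 a2 : Rel -> V) (I : Rel -> {set D * D})
  (r0 : Rel) (Rs : nat -> Rel) (j : nat) : {set tup V D} :=
  match j with
  | 0 => rtuples a1 a2 I r0
  | j'.+1 => njoin (sch a1 a2 r0 Rs j') (Tj a1 a2 I r0 Rs j')
                   (relattrs a1 a2 (Rs j')) (rtuples a1 a2 I (Rs j'))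
  end.

Definition vertex_packing (R : realType) (V Rel : finType) (a1 a2 : Rel -> V)
  (u : V -> R) : Prop :=
  (forall x, 0 <= u x <= 1) /\ (forall r, u (a1 r) + u (a2 r) <= 1).

Local Open Scope classical_set_scope.
Definition AGM (R : realType) (V Rel : finType) (a1 a2 : Rel -> V) (N : R) : R :=
  sup [set N `^ (\sum_(x : V) u x) | u in [set u | vertex_packing a1 a2 u]].

(* Join the relations one at a time and count the tuples of T_{j+1} fibrewise
   over T_j.  Lightness of R_j in the join attribute X_j bounds each fibre by
   sqrt N, and a fibre is a singleton when R_j adds no new attribute.  So every
   new attribute costs at most a factor sqrt N, and since T_0 has two attributes
   and at most N tuples, |T_m| <= N^(k/2).  The constant packing u = 1/2 shows
   N^(|V|/2) <= AGM(Q). *)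
From HB Require Import structures.
From mathcomp Require Import all_boot all_order all_algebra.
From mathcomp Require Import boolp classical_sets reals exp.
From mathcomp Require Import lra.
Import Order.TTheory GRing.Theory Num.Theory.
Local Open Scope ring_scope.

Section NaturalJoin.
Context {V D : finType}.
Implicit Types (S : {set V}) (T U : {set tup V D}) (t s : tup V D).

Lemma restrE {S x} t : x \in S -> restr S t x = t x.
Proof. by move=> xS; rewrite ffunE xS. Qed.

Lemma njoinP S T S' U t :
  reflect [/\ dom t = S :|: S', restr S t \in T & restr S' t \in U]
          (t \in njoin S T S' U).
Proof.
by rewrite inE; apply: (iffP and3P) => [[/eqP ? ? ?] | [-> ? ?]]; rewrite ?eqxx.
Qed.

Lemma njoin_inj S T S' U t t' :
  t \in njoin S T S' U -> t' \in njoin S T S' U ->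
  restr S t = restr S t' -> restr S' t = restr S' t' -> t = t'.
Proof.
move=> /njoinP [dt _ _] /njoinP [dt' _ _] eS eS'; apply/ffunP => x.
have [xS | xNS] := boolP (x \in S).
  by rewrite -(restrE t xS) -(restrE t' xS) eS.
have [xS' | xNS'] := boolP (x \in S').
  by rewrite -(restrE t xS') -(restrE t' xS') eS'.
have xNdom u : dom u = S :|: S' -> u x = None.
  move=> du; have : x \notin dom u by rewrite du !inE negb_or xNS.
  by rewrite /dom inE negbK => /eqP.
by rewrite !xNdom.
Qed.

Definition join_fibre S T S' U s : {set tup V D} :=
  [set t in njoin S T S' U | restr S t == s].

Lemma card_njoin S T S' U :
  #|njoin S T S' U| = (\sum_(s in T) #|join_fibre S T S' U s|)%N.
Proof.
rewrite -sum1_card (partition_big (restr S) (mem T)); last by move=> t /njoinP [].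
apply: eq_bigr => s _; rewrite -sum1_card.
by apply: eq_bigl => t; rewrite /join_fibre inE.
Qed.

Lemma card_join_fibre S T S' U s X : X \in S -> X \in S' ->
  (#|join_fibre S T S' U s| <= #|[set u in U | u X == s X]|)%N.
Proof.
move=> XS XS'; rewrite /join_fibre -(@card_in_imset _ _ (restr S')).
  apply/subset_leq_card/fintype.subsetP.
  move=> _ /imsetP [t /setIdP [/njoinP [_ _ tU] /eqP <-] ->].
  by rewrite inE tU (restrE t XS) (restrE t XS') eqxx.
move=> t t' /setIdP [tJ /eqP ts] /setIdP [t'J /eqP t's].
by apply: njoin_inj tJ t'J _; rewrite ts t's.
Qed.

Lemma card_join_fibre_sub S T S' U s : S' \subset S ->
  (#|join_fibre S T S' U s| <= 1)%N.
Proof.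
move=> /fintype.subsetP sS'S; apply/card_le1_eqP.
move=> t t' /setIdP [tJ /eqP ts] /setIdP [t'J /eqP t's].
apply: njoin_inj t'J tJ _ _; first by rewrite ts t's.
apply/ffunP => x; rewrite !ffunE; case: ifP => // /sS'S xS.
by rewrite -(restrE t xS) -(restrE t' xS) ts t's.
Qed.

End NaturalJoin.

Section RelationInstance.
Context {V D Rel : finType} {a1 a2 : Rel -> V} {I : Rel -> {set D * D}}.
Context {R : realType} {N : R}.

Definition rel_tuple (r : Rel) (p : D * D) : tup V D :=
  [ffun x => if x == a1 r then Some p.1 else if x == a2 r then Some p.2 else None].

Definition attr_val (r : Rel) (X : V) (p : D * D) : D :=
  if X == a1 r then p.1 else p.2.

Lemma rtuplesE r : rtuples a1 a2 I r = rel_tuple r @: I r.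
Proof.
apply/setP => t; rewrite inE.
apply/existsP/imsetP => [[p /andP [pI /eqP ->]] | [p pI ->]]; first by exists p.
by exists p; rewrite pI eqxx.
Qed.

Lemma card_rtuples r : (#|rtuples a1 a2 I r| <= #|I r|)%N.
Proof. by rewrite rtuplesE; apply: leq_imset_card. Qed.

Lemma rel_tuple_at r p X : X \in relattrs a1 a2 r ->
  rel_tuple r p X = Some (attr_val r X p).
Proof.
rewrite /attr_val ffunE !inE.
by case: (X == a1 r) => //= /eqP ->; rewrite eqxx.
Qed.

Lemma card_rtuples_at r X (o : option D) : X \in relattrs a1 a2 r ->
  (#|[set u in rtuples a1 a2 I r | u X == o]|
     <= #|[set p in I r | Some (attr_val r X p) == o]|)%N.
Proof.
move=> Xr; rewrite rtuplesE; apply: leq_trans (leq_imset_card (rel_tuple r) _).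
apply/subset_leq_card/fintype.subsetP => _ /setIdP [/imsetP [p pI ->] pX].
by apply: imset_f; rewrite inE pI -rel_tuple_at.
Qed.

Lemma light_card_rtuples_at r X (o : option D) :
  X \in relattrs a1 a2 r -> light a1 a2 I N r X ->
  (#|[set u in rtuples a1 a2 I r | u X == o]|)%:R <= Num.sqrt N.
Proof.
move=> Xr hl.
apply: le_trans (_ : #|[set p in I r | Some (attr_val r X p) == o]|%:R <= _).
  by rewrite ler_nat card_rtuples_at.
case: o => [a | ].
  have -> : [set p in I r | Some (attr_val r X p) == Some a]
            = [set p in I r | attr_val r X p == a].
    by apply/setP => p; rewrite !inE (inj_eq Some_inj).
  exact: hl.
rewrite (_ : [set _ in _ | _] = finset.set0) ?cards0 ?sqrtr_ge0 //.
by apply/setP => p; rewrite !inE andbF.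
Qed.

Lemma card_njoin_rtuples (S : {set V}) (T : {set tup V D}) r X :
  X \in relattrs a1 a2 r -> X \in S -> light a1 a2 I N r X ->
  (#|njoin S T (relattrs a1 a2 r) (rtuples a1 a2 I r)|)%:R
    <= (#|T|)%:R * (if relattrs a1 a2 r \subset S then 1 else Num.sqrt N).
Proof.
move=> Xr XS hl; rewrite card_njoin natr_sum mulr_natl -sumr_const.
apply: ler_sum => s _.
case: ifP => [sub | _]; first by rewrite lern1 card_join_fibre_sub.
apply: le_trans (light_card_rtuples_at _ _ (s X) Xr hl).
by rewrite ler_nat card_join_fibre.
Qed.

End RelationInstance.

Section HalfPowers.
Context {R : realType} {N : R} {V : finType}.

Lemma powR_half_card_setU (S S' : {set V}) :
  1 <= N ->
  N `^ (#|S|%:R / 2) * (if S' \subset S then 1 else Num.sqrt N)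
    <= N `^ (#|S :|: S'|%:R / 2).
Proof.
move=> N1; have N0 : 0 <= N by lra.
case: ifP => [_ | /negbT nsub].
  rewrite mulr1 ler_powR // ler_pM2r ?invr_gt0 // ler_nat.
  by rewrite subset_leq_card // finset.subsetUl.
rewrite -powR12_sqrt // -powRD; last by apply/implyP => _; lra.
rewrite ler_powR //.
have : (#|S|.+1 <= #|S :|: S'|)%N := proper_card (properUl nsub).
by rewrite -(ler_nat R) -natr1; lra.
Qed.

Context {Rel : finType} {a1 a2 : Rel -> V}.

Lemma half_vertex_packing :
  vertex_packing a1 a2 (fun=> 2^-1 : R).
Proof. by split => [x | r]; [apply/andP; split | ]; lra. Qed.

Lemma powR_half_card_le_AGM (k : nat) :
  1 <= N -> (k <= #|V|)%N -> N `^ (k%:R / 2) <= AGM a1 a2 N.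
Proof.
move=> N1 kV; have N0 : 0 <= N by lra.
have bounded : has_ubound [set N `^ (\sum_(x : V) u x) | u in
                             [set u | vertex_packing a1 a2 u]]%classic.
  exists (N `^ #|V|%:R) => _ [u [u01 _] <-].
  rewrite ler_powR // -sum1_card natr_sum; apply: ler_sum => x _.
  by case/andP: (u01 x).
apply: le_trans (ub_le_sup bounded (imageP _ half_vertex_packing)).
rewrite ler_powR // sumr_const -mulr_natr.
have : k%:R <= #|V|%:R :> R by rewrite ler_nat.
lra.
Qed.

End HalfPowers.

Section JoinSequence.
Context {R : realType} {V D Rel : finType} {a1 a2 : Rel -> V}.
Context (hdist : forall r, a1 r != a2 r).
Context {N : R} {I : Rel -> {set D * D}} {r0 : Rel} {Rs : nat -> Rel} {X : nat -> V}.
Context (hN : 1 <= N) (hI : forall r, (#|I r|)%:R <= N).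

Lemma card_Tj_le m :
  (forall j, (j < m)%N ->
     [/\ X j \in relattrs a1 a2 (Rs j), X j \in sch a1 a2 r0 Rs j
       & light a1 a2 I N (Rs j) (X j)]) ->
  (#|Tj a1 a2 I r0 Rs m|)%:R <= N `^ (#|sch a1 a2 r0 Rs m|%:R / 2).
Proof.
have N0 : 0 <= N := le_trans ler01 hN.
elim: m => [_ | j IH hX] /=.
  rewrite /relattrs cards2 hdist divff ?pnatr_eq0 // powRr1 //.
  by apply: le_trans (hI r0); rewrite ler_nat card_rtuples.
have [XR XS hl] := hX j (ltnSn j).
apply: le_trans (card_njoin_rtuples _ _ _ _ XR XS hl) _.
apply: le_trans (powR_half_card_setU _ _ hN).
apply: ler_wpM2r; last by apply: IH => i ij; apply: hX; apply: ltnW.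
by case: ifP => // _; apply: sqrtr_ge0.
Qed.

End JoinSequence.

Theorem mainTheorem4 (R : realType) (V D Rel : finType) (a1 a2 : Rel -> V)
  (hdist : forall r, a1 r != a2 r)
  (N : R) (hN : 1 <= N) (I : Rel -> {set D * D})
  (hI : forall r, (#|I r|)%:R <= N)
  (r0 : Rel) (m : nat) (Rs : nat -> Rel) (X : nat -> V)
  (hX : forall j, (j < m)%N ->
     [/\ X j \in relattrs a1 a2 (Rs j), X j \in sch a1 a2 r0 Rs j
       & light a1 a2 I N (Rs j) (X j)]) :
  let k := #|sch a1 a2 r0 Rs m| in
  (#|Tj a1 a2 I r0 Rs m|)%:R <= N `^ (k%:R / 2) /\
  N `^ (k%:R / 2) <= AGM a1 a2 N.
Proof.
split; first exact (card_Tj_le hdist hN hI _ hX).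
by apply: powR_half_card_le_AGM hN _; apply: max_card.
Qed.
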